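(* Fix $\gamma>0$. Let $\{\psi^t\}$ be any feasible family and $|V^0| = \max_{t\in\mathcal{T}}|V^t|$. Define the simultaneously updated potentials $$\hat\psi^t_i(l) = \psi^t_i(l) - \frac{1}{|V^0|}\Big(\nu^t_i(l) - \tfrac{1}{|\mathcal{T}(i)|}\sum_{\bar t\in\mathcal{T}(i)}\nu^{\bar t}_i(l)\Big), \qquad \forall i\in V,\ t\in\mathcal{T}(i),\ l\in\mathcal{L},$$ with all smoothed max-marginals computed from the pre-update potentials. Then $\{\hat\psi^t\}$ is feasible and $D_\gamma(\{\hat\psi^t\}) \le D_\gamma(\{\psi^t\})$.
   Context: Let $G=(V,E)$ be a finite graph and $\mathcal{L}=\{1,\dots,L\}$ a finite label set. Unary scores $\psi_i \in \mathbb{R}^{\mathcal{L}}$ ($i \in V$) and pairwise scores $\phi_{ij} \in \mathbb{R}^{\mathcal{L}\times\mathcal{L}}$ ($ij \in E$) are given. Let $\mathcal{T}$ be a finite collection of trees (sub-problems), each tree $t$ being a subgraph of $G$ with vertex set $V^t$ and edge set $E^t \subseteq E$, such that every vertex of $V$ lies in at least one tree and every edge of $E$ lies in exactly one tree. Write $\mathcal{T}(i) = \{t \in \mathcal{T} : i \in V^t\}$. Each sub-problem $t$ carries unary potentials $\psi^t_i \in \mathbb{R}^{\mathcal{L}}$ for $i \in V^t$; the family $\{\psi^t\}$ is called feasible if $\sum_{t \in \mathcal{T}(i)} \psi^t_i = \psi_i$ for every $i \in V$. For a labeling $x : V^t \to \mathcal{L}$ define the tree energy $E^t(x) = \sum_{i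 \in V^t} \psi^t_i(x_i) + \sum_{ij \in E^t} \phi_{ij}(x_i,x_j)$. For a parameter $\gamma>0$, the smoothed max-energy of sub-problem $t$ is $\nu^t = \gamma \log \sum_{x : V^t\to\mathcal{L}} \exp(E^t(x)/\gamma)$, and for $i\in V^t$, $l\in\mathcal{L}$ the smoothed max-marginal is $\nu^t_i(l) = \gamma\log\sum_{x:V^t\to\mathcal{L},\ x_i=l}\exp(E^t(x)/\gamma)$. The smoothed dual objective is $D_\gamma(\{\psi^t\}) = \sum_{t \in \mathcal{T}} \nu^t$. *)

From mathcomp Require Import all_boot.
From Stdlib Require Import Reals.

Set Implicit Arguments.
Unset Strict Implicit.
Unset Printing Implicit Defensive.

Local Open Scope R_scope.

Section Defs.

(* V : vertices; E : edges with endpoints src/dst (the pairwise score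
   phi e is phi_{ij} with i = src e, j = dst e); T : index type of the
   sub-problems (trees); labels are 'I_nL.+1, i.e. a set of nL+1 >= 1 labels. *)
Variables (V E T : finType) (src dst : E -> V) (nL : nat).
Variables (VT : T -> {set V}) (ET : T -> {set E}).

Definition Lab := 'I_nL.+1.

Definition tree_adj (t : T) : rel V :=
  fun u v => [exists e in ET t,
     ((src e == u) && (dst e == v)) || ((src e == v) && (dst e == u))].

Definition is_tree (t : T) : Prop :=
  [/\ leq 1 #|VT t|,
      #|ET t| = subn #|VT t| 1 &
      forall u v, u \in VT t -> v \in VT t -> connect (tree_adj t) u v].

Definition tree_decomposition : Prop :=
  [/\ forall t, is_tree t,
      forall t e, e \in ET t -> src e \in VT t /\ dst e \in VT t,
      forall i, exists t, i \in VT t &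
      forall e, exists! t, e \in ET t].

Definition Tof (i : V) : {set T} := [set t | i \in VT t].

(* labelings x : V^t -> Lab, represented as total functions V -> Lab that
   take the fixed value ord0 outside V^t (a bijective encoding). *)
Definition labeling_of (t : T) (x : {ffun V -> Lab}) : bool :=
  [forall i, (i \notin VT t) ==> (x i == ord0)].

Definition Rsum {I : finType} (P : pred I) (F : I -> R) : R :=
  \big[Rplus/0]_(i | P i) F i.

Variables (phi : E -> Lab -> Lab -> R).

Definition energy (psit : T -> V -> Lab -> R) (t : T) (x : {ffun V -> Lab}) : R :=
  \big[Rplus/0]_(i in VT t) psit t i (x i)
  + \big[Rplus/0]_(e in ET t) phi e (x (src e)) (x (dst e)).

Definition smax_energy (gamma : R) (psit : T -> V -> Lab -> R) (t : T) : R :=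
  gamma * ln (\big[Rplus/0]_(x | labeling_of t x) exp (energy psit t x / gamma)).

Definition smax_marginal (gamma : R) (psit : T -> V -> Lab -> R)
    (t : T) (i : V) (l : Lab) : R :=
  gamma * ln (\big[Rplus/0]_(x | labeling_of t x && (x i == l))
                 exp (energy psit t x / gamma)).

Definition dual_obj (gamma : R) (psit : T -> V -> Lab -> R) : R :=
  \big[Rplus/0]_(t : T) smax_energy gamma psit t.

Definition feasible (psi : V -> Lab -> R) (psit : T -> V -> Lab -> R) : Prop :=
  forall i l, \big[Rplus/0]_(t in Tof i) psit t i l = psi i l.

Definition V0size : nat := \max_(t : T) #|VT t|.

(* simultaneous update (values for i notin V^t are irrelevant) *)
Definition updated (gamma : R) (psit : T -> V -> Lab -> R) : T -> V -> Lab -> R :=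
  fun t i l =>
    psit t i l
    - / INR V0size *
      (smax_marginal gamma psit t i l
       - / INR #|Tof i| *
         \big[Rplus/0]_(tb in Tof i) smax_marginal gamma psit tb i l).

End Defs.

(* Write the smoothed energy of a tree, after the update, as the convex
   combination with weights 1/|V^0| of the |V^t| shifted energies
   E^t(x) + (avg_{tb in T(k)} nu^tb_k - nu^t_k)(x_k), k in V^t, plus the
   remaining weight 1 - |V^t|/|V^0| on E^t itself.  Log-sum-exp is convex,
   marginalising the k-th shifted energy over x_k turns its log-sum-exp into
   that of the averaged max-marginals of k, and a second application of
   convexity bounds the latter by the average of the nu^tb, tb in T(k).
   Summing over t, each nu^tb is counted |V^tb|/|V^0| times through the
   vertices of tb and 1 - |V^tb|/|V^0| times directly. *)

From Pilot Require Import Defs.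
From HB Require Import structures.
From mathcomp Require Import all_boot.
From Stdlib Require Import Reals Lra.

Set Implicit Arguments.
Unset Strict Implicit.
Unset Printing Implicit Defensive.

Local Open Scope R_scope.

HB.instance Definition _ := Monoid.isComLaw.Build R 0 Rplus
  (fun a b c => esym (Rplus_assoc a b c)) Rplus_comm Rplus_0_l.
HB.instance Definition _ := Monoid.isMulLaw.Build R 0 Rmult Rmult_0_l Rmult_0_r.
HB.instance Definition _ :=
  Monoid.isAddLaw.Build R Rmult Rplus Rmult_plus_distr_r Rmult_plus_distr_l.

Section RealSums.
Variable I : finType.
Implicit Types (P : pred I) (F G : I -> R).

Lemma sumR_le P F G : (forall i, P i -> F i <= G i) ->
  \big[Rplus/0]_(i | P i) F i <= \big[Rplus/0]_(i | P i) G i.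
Proof. by move=> FG; apply: (big_ind2 Rle) => //; [lra | move=> *; lra]. Qed.

Lemma sumR_ge0 P F : (forall i, P i -> 0 <= F i) -> 0 <= \big[Rplus/0]_(i | P i) F i.
Proof. by move=> F0; apply: (big_ind (Rle 0)) => //; [lra | move=> *; lra]. Qed.

Lemma sumR_gt0 P F i0 : P i0 -> (forall i, P i -> 0 < F i) ->
  0 < \big[Rplus/0]_(i | P i) F i.
Proof.
move=> Pi0 F0; rewrite (bigD1 i0) //=.
have : 0 <= \big[Rplus/0]_(i | P i && (i != i0)) F i.
  by apply: sumR_ge0 => i /andP[Pi _]; apply: Rlt_le; apply: F0.
by have := F0 i0 Pi0; lra.
Qed.

Lemma sumR_const (A : {pred I}) c : \big[Rplus/0]_(i in A) c = INR #|A| * c.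
Proof.
rewrite big_const; elim: #|A| => [|n IHn]; first by rewrite /= Rmult_0_l.
by rewrite iterS IHn S_INR; lra.
Qed.

Lemma sumR_sub P F G : \big[Rplus/0]_(i | P i) (F i - G i)
  = \big[Rplus/0]_(i | P i) F i - \big[Rplus/0]_(i | P i) G i.
Proof. by rewrite /Rminus big_split /= (big_morph Ropp Ropp_plus_distr Ropp_0). Qed.

Definition avg (A : {set I}) F := / INR #|A| * \big[Rplus/0]_(i in A) F i.

(* No nonemptiness hypothesis: for [A = set0] both sides vanish. *)
Lemma card_mul_avg (A : {set I}) F :
  INR #|A| * avg A F = \big[Rplus/0]_(i in A) F i.
Proof.
rewrite /avg; have [/eqP/cards0_eq -> | A_n0] := boolP (#|A| == 0)%nat.
  by rewrite cards0 big_set0 /=; ring.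
have : 0 < INR #|A| by apply: lt_0_INR; apply/ltP; rewrite lt0n.
by move=> A_gt0; field; lra.
Qed.

Lemma sum_sub_avg (A : {set I}) F :
  \big[Rplus/0]_(i in A) (F i - avg A F) = 0.
Proof. by rewrite sumR_sub sumR_const card_mul_avg; ring. Qed.

End RealSums.

Lemma ln_le_sub1 y : 0 < y -> ln y <= y - 1.
Proof. by move=> y_gt0; have := exp_ineq1_le (ln y); rewrite exp_ln //; lra. Qed.

Lemma ln_exp_div a b : 0 < b -> ln (exp a / b) = a - ln b.
Proof.
move=> b_gt0; rewrite /Rdiv ln_mult ?ln_Rinv ?ln_exp //; first exact: exp_pos.
exact: Rinv_0_lt_compat.
Qed.

Section LogSumExp.
Variable X : finType.
Implicit Types (P : pred X) (f g q : X -> R).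

Definition lse P f := ln (\big[Rplus/0]_(x | P x) exp (f x)).

Definition softmax P f x := exp (f x) / \big[Rplus/0]_(y | P y) exp (f y).

Lemma sum_exp_gt0 P f x0 : P x0 -> 0 < \big[Rplus/0]_(x | P x) exp (f x).
Proof. by move=> Px0; apply: (sumR_gt0 Px0) => x _; apply: exp_pos. Qed.

Lemma softmax_gt0 P f x : P x -> 0 < softmax P f x.
Proof. by move=> Px; apply: Rdiv_lt_0_compat; [apply: exp_pos | apply: sum_exp_gt0 Px]. Qed.

Lemma sum_softmax P f x0 : P x0 -> \big[Rplus/0]_(x | P x) softmax P f x = 1.
Proof.
move=> Px0; have := sum_exp_gt0 f Px0.
by rewrite /softmax /Rdiv -big_distrl /= => Z_gt0; field; lra.
Qed.

(* Gibbs' variational inequality; equality holds at [q = softmax P f]. *)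
Lemma lse_ge_gibbs P f q : (forall x, P x -> 0 < q x) ->
  \big[Rplus/0]_(x | P x) q x = 1 ->
  \big[Rplus/0]_(x | P x) (q x * (f x - ln (q x))) <= lse P f.
Proof.
move=> q_gt0 q_sum1.
have [x0 Px0 | P0] := pickP P; last by move: q_sum1; rewrite big_pred0 //; lra.
set Z := \big[Rplus/0]_(x | P x) exp (f x).
have Z_gt0 : 0 < Z := sum_exp_gt0 f Px0.
have pointwise x : P x ->
    q x * (f x - ln (q x)) - q x * ln Z <= exp (f x) / Z - q x.
  move=> Px; have qx_gt0 := q_gt0 x Px.
  have y_gt0 : 0 < exp (f x) / (q x * Z).
    by apply: Rdiv_lt_0_compat; [apply: exp_pos | apply: Rmult_lt_0_compat].
  have := Rmult_le_compat_l _ _ _ (Rlt_le _ _ qx_gt0) (ln_le_sub1 y_gt0).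
  rewrite ln_exp_div ?ln_mult //; last exact: Rmult_lt_0_compat.
  have -> : q x * (exp (f x) / (q x * Z) - 1) = exp (f x) / Z - q x.
    by field; lra.
  lra.
have := sumR_le pointwise.
rewrite !sumR_sub -big_distrl /= q_sum1 /Rdiv -big_distrl /= -/Z /lse -/Z Rinv_r; lra.
Qed.

Lemma lse_softmax_entropy P f x0 : P x0 ->
  \big[Rplus/0]_(x | P x) (softmax P f x * (f x - ln (softmax P f x))) = lse P f.
Proof.
move=> Px0; have Z_gt0 := sum_exp_gt0 f Px0.
have entropy_term x :
    softmax P f x * (f x - ln (softmax P f x)) = softmax P f x * lse P f.
  by rewrite {2}/softmax ln_exp_div //; rewrite /lse; ring.
by rewrite (eq_bigr _ (fun x _ => entropy_term x)) -big_distrl /= (sum_softmax f Px0) Rmult_1_l.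
Qed.

Lemma lse_convex (K : finType) (PK : pred K) (w : K -> R) (w0 : R)
    (f : K -> X -> R) (f0 : X -> R) P x0 : P x0 ->
  (forall k, PK k -> 0 <= w k) -> 0 <= w0 ->
  \big[Rplus/0]_(k | PK k) w k + w0 = 1 ->
  lse P (fun x => \big[Rplus/0]_(k | PK k) (w k * f k x) + w0 * f0 x)
  <= \big[Rplus/0]_(k | PK k) (w k * lse P (f k)) + w0 * lse P f0.
Proof.
move=> Px0 w_ge0 w0_ge0 w_sum1.
set g := fun x => _ + _.
set q := softmax P g.
rewrite -(lse_softmax_entropy g Px0) -/q.
have split_entropy x : q x * (g x - ln (q x)) =
    \big[Rplus/0]_(k | PK k) (w k * (q x * (f k x - ln (q x))))
    + w0 * (q x * (f0 x - ln (q x))).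
  have -> : \big[Rplus/0]_(k | PK k) (w k * (q x * (f k x - ln (q x)))) =
      q x * \big[Rplus/0]_(k | PK k) (w k * f k x)
      - q x * ln (q x) * \big[Rplus/0]_(k | PK k) w k.
    by rewrite !big_distrr -sumR_sub /=; apply: eq_bigr => k _; ring.
  by rewrite /g (_ : \big[Rplus/0]_(k | PK k) w k = 1 - w0); [ring | lra].
rewrite (eq_bigr _ (fun x _ => split_entropy x)) big_split exchange_big /=.
rewrite -big_distrr /=; apply: Rplus_le_compat.
  apply: sumR_le => k PKk; rewrite -big_distrr /=.
  apply: Rmult_le_compat_l; first exact: w_ge0.
  by apply: lse_ge_gibbs => [x Px|]; [exact: softmax_gt0 | exact: sum_softmax Px0].
apply: Rmult_le_compat_l => //.
by apply: lse_ge_gibbs => [x Px|]; [exact: softmax_gt0 | exact: sum_softmax Px0].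
Qed.

End LogSumExp.

Lemma eq_lse (X : finType) (P : pred X) (f g : X -> R) :
  (forall x, P x -> f x = g x) -> lse P f = lse P g.
Proof. by move=> fg; congr ln; apply: eq_bigr => x /fg ->. Qed.

Definition slse (gamma : R) (X : finType) (P : pred X) (f : X -> R) :=
  gamma * lse P (fun x => f x / gamma).

Section TemperedLogSumExp.
Variable gamma : R.
Hypothesis gamma_gt0 : 0 < gamma.

Lemma eq_slse (X : finType) (P : pred X) (f g : X -> R) :
  (forall x, P x -> f x = g x) -> slse gamma P f = slse gamma P g.
Proof. by move=> fg; congr (_ * _); apply: eq_lse => x /fg ->. Qed.

Lemma slse_convex (X K : finType) (PK : pred K) (w : K -> R) (w0 : R)
    (f : K -> X -> R) (f0 : X -> R) (P : pred X) x0 : P x0 ->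
  (forall k, PK k -> 0 <= w k) -> 0 <= w0 ->
  \big[Rplus/0]_(k | PK k) w k + w0 = 1 ->
  slse gamma P (fun x => \big[Rplus/0]_(k | PK k) (w k * f k x) + w0 * f0 x)
  <= \big[Rplus/0]_(k | PK k) (w k * slse gamma P (f k)) + w0 * slse gamma P f0.
Proof.
move=> Px0 w_ge0 w0_ge0 w_sum1.
have := lse_convex (fun k x => f k x / gamma) (fun x => f0 x / gamma) Px0
  w_ge0 w0_ge0 w_sum1.
move=> /(Rmult_le_compat_l _ _ _ (Rlt_le _ _ gamma_gt0)) convex.
rewrite /slse (eq_lse (g := fun x => \big[Rplus/0]_(k | PK k) (w k * (f k x / gamma))
                                     + w0 * (f0 x / gamma))).
  apply: (Rle_trans _ _ _ convex); right.
  by rewrite Rmult_plus_distr_l big_distrr /=; congr (_ + _);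
    [apply: eq_bigr => k _ |]; ring.
by move=> x _; rewrite /Rdiv Rmult_plus_distr_r big_distrl /=;
  congr (_ + _); [apply: eq_bigr => k _ |]; ring.
Qed.

(* The fibres of [h] must be nonempty so that [exp] undoes [ln] on the inner
   sums. *)
Lemma slse_partition (X Y : finType) (P : pred X) (h : X -> Y)
    (f : X -> R) (c : Y -> R) :
  (forall y, exists2 x, P x & h x = y) ->
  slse gamma P (fun x => f x + c (h x))
  = slse gamma predT (fun y => slse gamma (fun x => P x && (h x == y)) f + c y).
Proof.
move=> fibre; rewrite /slse /lse; congr (gamma * ln _).
rewrite (partition_big h predT) //=; apply: eq_bigr => y _.
have [x Px hx] := fibre y.
set S := \big[Rplus/0]_(x | P x && (h x == y)) exp (f x / gamma).
have S_gt0 : 0 < S by apply: (sum_exp_gt0 _ (x0 := x)); rewrite Px hx eqxx.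
have -> : (gamma * ln S + c y) / gamma = ln S + c y / gamma by field; lra.
rewrite exp_plus exp_ln // big_distrl /=; apply: eq_bigr => x' /andP[_ /eqP <-].
by rewrite -exp_plus /Rdiv Rmult_plus_distr_r.
Qed.

End TemperedLogSumExp.

Section DualUpdate.
Variables (V E T : finType) (src dst : E -> V) (nL : nat).
Variables (VT : T -> {set V}) (ET : T -> {set E}) (phi : E -> Lab nL -> Lab nL -> R).
Variable gamma : R.
Hypothesis gamma_gt0 : 0 < gamma.

Local Notation Tof := (Tof VT).
Local Notation labeling := (labeling_of VT).
Local Notation energy := (Defs.energy src dst VT ET phi).
Local Notation nu := (smax_energy src dst VT ET phi gamma).
Local Notation mu := (smax_marginal src dst VT ET phi gamma).
Local Notation update := (updated src dst VT ET phi gamma).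
Local Notation N := (INR (V0size VT)).

Lemma smax_energyE ps t : nu ps t = slse gamma (labeling t) (energy ps t).
Proof. by []. Qed.

Lemma labeling_fibre t i (l : Lab nL) : i \in VT t ->
  exists2 x, labeling t x & x i = l.
Proof.
move=> it; exists [ffun j => if j == i then l else ord0]; last by rewrite ffunE eqxx.
apply/forallP => j; rewrite ffunE; apply/implyP => jt.
by case: (j =P i) => // ji; rewrite ji it in jt.
Qed.

Lemma smax_energy_shift ps t i (c : Lab nL -> R) : i \in VT t ->
  slse gamma (labeling t) (fun x => energy ps t x + c (x i))
  = slse gamma predT (fun l => mu ps t i l + c l).
Proof. by move=> it; apply: slse_partition => // l; apply: labeling_fibre. Qed.

Lemma smax_energy_marginal ps t i : i \in VT t ->
  nu ps t = slse gamma predT (mu ps t i).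
Proof.
move=> it; transitivity (slse gamma (labeling t) (fun x => energy ps t x + 0)).
  by apply: eq_slse => x _; ring.
by rewrite (smax_energy_shift ps (fun=> 0) it); apply: eq_slse => l _; ring.
Qed.

Lemma slse_avg_marginal_le ps i : (0 < #|Tof i|)%nat ->
  slse gamma predT (fun l => avg (Tof i) (fun t => mu ps t i l)) <= avg (Tof i) (nu ps).
Proof.
move=> Ti_gt0; have c_gt0 : 0 < INR #|Tof i| by apply: lt_0_INR; apply/ltP.
have := @slse_convex _ gamma_gt0 _ _ (fun t => t \in Tof i) (fun=> / INR #|Tof i|) 0
  (fun t l => mu ps t i l) (fun=> 0) predT ord0 isT
  (fun _ _ => Rlt_le _ _ (Rinv_0_lt_compat _ c_gt0)) (Rle_refl 0).
rewrite sumR_const; move/(_ ltac:(field; lra)) => convex.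
apply: Rle_trans (Rle_trans _ _ _ (Req_le _ _ _) convex) (Req_le _ _ _).
  by apply: eq_slse => l _; rewrite /avg big_distrr /=; ring.
rewrite Rmult_0_l Rplus_0_r /avg big_distrr /=.
by apply: eq_bigr => t; rewrite in_set => /smax_energy_marginal ->.
Qed.

Lemma energy_updated ps t x : energy (update ps) t x = energy ps t x
  - \big[Rplus/0]_(i in VT t)
      (/ N * (mu ps t i (x i) - avg (Tof i) (fun tb => mu ps tb i (x i)))).
Proof.
rewrite /Defs.energy /updated sumR_sub /Rminus !Rplus_assoc.
by congr (_ + _); apply: Rplus_comm.
Qed.

Lemma card_le_V0size t : (#|VT t| <= V0size VT)%nat.
Proof. exact: (@leq_bigmax _ (fun t => #|VT t|)). Qed.

Definition marginal_gap ps t k l :=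
  avg (Tof k) (fun tb => mu ps tb k l) - mu ps t k l.

Lemma smax_energy_updated_mix ps t : nu (update ps) t = slse gamma (labeling t)
  (fun x => \big[Rplus/0]_(k in VT t) (/ N * (energy ps t x + marginal_gap ps t k (x k)))
            + (1 - INR #|VT t| / N) * energy ps t x).
Proof.
rewrite smax_energyE; apply: eq_slse => x _.
have -> : \big[Rplus/0]_(k in VT t) (/ N * (energy ps t x + marginal_gap ps t k (x k)))
    = INR #|VT t| * (/ N * energy ps t x) - \big[Rplus/0]_(k in VT t)
        (/ N * (mu ps t k (x k) - avg (Tof k) (fun tb => mu ps tb k (x k)))).
  by rewrite -sumR_const -sumR_sub; apply: eq_bigr => k _; rewrite /marginal_gap; ring.
(* The two vertex sums agree only up to conversion, which [ring] ignores. *)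
rewrite energy_updated /Rdiv.
by move: (energy ps t x) (\big[Rplus/0]_(k in VT t) _) => e s; ring.
Qed.

Lemma smax_energy_updated_le ps t : (0 < #|VT t|)%nat ->
  nu (update ps) t <= / N * \big[Rplus/0]_(k in VT t) avg (Tof k) (nu ps)
                      + (1 - INR #|VT t| / N) * nu ps t.
Proof.
move=> Vt_gt0.
have Vt_pos : 0 < INR #|VT t| by apply: lt_0_INR; apply/ltP.
have VtN : INR #|VT t| <= N by apply: le_INR; apply/leP; apply: card_le_V0size.
have N_gt0 : 0 < N by lra.
have w0_ge0 : 0 <= 1 - INR #|VT t| / N.
  have : INR #|VT t| / N <= 1.
    by apply: (Rmult_le_reg_r N) => //; rewrite /Rdiv Rmult_assoc Rinv_l; lra.
  lra.
have w_sum1 : \big[Rplus/0]_(k in VT t) / N + (1 - INR #|VT t| / N) = 1.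
  by rewrite sumR_const; field; lra.
have lab0 : labeling t [ffun=> ord0 : Lab nL].
  by apply/forallP => j; rewrite ffunE eqxx implybT.
have := @slse_convex _ gamma_gt0 _ _ (fun k => k \in VT t) (fun=> / N) _
  (fun k x => energy ps t x + marginal_gap ps t k (x k)) (energy ps t) (labeling t) _
  lab0 (fun _ _ => Rlt_le _ _ (Rinv_0_lt_compat _ N_gt0)) w0_ge0 w_sum1.
rewrite -smax_energy_updated_mix -smax_energyE big_distrr /= => /Rle_trans; apply.
apply: Rplus_le_compat_r; apply: sumR_le => k kt.
apply: Rmult_le_compat_l; first exact: Rlt_le (Rinv_0_lt_compat _ N_gt0).
rewrite (smax_energy_shift ps (marginal_gap ps t k) kt).
have Tk_gt0 : (0 < #|Tof k|)%nat by apply/card_gt0P; exists t; rewrite in_set.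
apply: Rle_trans (slse_avg_marginal_le ps Tk_gt0); right.
by apply: eq_slse => l _; rewrite /marginal_gap; ring.
Qed.

Lemma exchange_tree_vertices (F : T -> V -> R) :
  \big[Rplus/0]_t \big[Rplus/0]_(k in VT t) F t k
  = \big[Rplus/0]_k \big[Rplus/0]_(t in Tof k) F t k.
Proof.
rewrite (exchange_big_dep predT) //=; apply: eq_bigr => k _.
by apply: eq_bigl => t; rewrite in_set.
Qed.

Lemma sum_vertex_avg (F : T -> R) :
  \big[Rplus/0]_t \big[Rplus/0]_(k in VT t) avg (Tof k) F
  = \big[Rplus/0]_t (INR #|VT t| * F t).
Proof.
rewrite exchange_tree_vertices (eq_bigr _ (fun k _ => sumR_const _ _)).
under eq_bigr do rewrite card_mul_avg.
rewrite -(exchange_tree_vertices (fun t _ => F t)).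
by apply: eq_bigr => t _; rewrite sumR_const.
Qed.

Lemma dual_obj_updated_le ps : (forall t, 0 < #|VT t|)%nat ->
  dual_obj src dst VT ET phi gamma (update ps) <= dual_obj src dst VT ET phi gamma ps.
Proof.
move=> VT_gt0; rewrite /dual_obj.
apply: Rle_trans (sumR_le (fun t _ => smax_energy_updated_le ps (VT_gt0 t))) _.
rewrite big_split /= -big_distrr /= sum_vertex_avg big_distrr -big_split /=.
by right; apply: eq_bigr => t _; rewrite /Rdiv; ring.
Qed.

Lemma updated_feasible psi ps : feasible VT psi ps -> feasible VT psi (update ps).
Proof.
move=> feas i l; rewrite /updated sumR_sub feas -big_distrr /=.
by rewrite (sum_sub_avg (Tof i) (fun t => mu ps t i l)); ring.
Qed.

End DualUpdate.

Theorem theorem2 (V E T : finType) (src dst : E -> V) (nL : nat)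
  (VT : T -> {set V}) (ET : T -> {set E})
  (psi : V -> Lab nL -> R) (phi : E -> Lab nL -> Lab nL -> R)
  (gamma : R) (psit : T -> V -> Lab nL -> R) :
  tree_decomposition src dst VT ET ->
  0 < gamma ->
  feasible VT psi psit ->
  feasible VT psi (updated src dst VT ET phi gamma psit) /\
  dual_obj src dst VT ET phi gamma (updated src dst VT ET phi gamma psit)
    <= dual_obj src dst VT ET phi gamma psit.
Proof.
move=> [trees _ _ _] gamma_gt0 feas; split; first exact: updated_feasible.
by apply: dual_obj_updated_le => // t; case: (trees t).
Qed.
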